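(* Fix $D_0>0$, $\alpha>0$, $p^a\ge0$, $\gamma\in(0,1)$. Let $d(p^s,p^c)=\max\{D_0-\alpha(p^s+p^c),0\}$. Consider the ex post regulation game in which the ISP chooses $p^s\in\mathbb{R}$ and the CP chooses $p^c\in\mathbb{R}$ simultaneously, with payoffs $$U_{ISP}(p^s,p^c)=\gamma\, d(p^s,p^c)\,(p^s+p^c+p^a),\qquad U_{CP}(p^s,p^c)=(1-\gamma)\, d(p^s,p^c)\,(p^s+p^c+p^a).$$ A profile $(p^s,p^c)$ is a pure-strategy Nash equilibrium if and only if $$p^s+p^c=\frac{D_0-\alpha p^a}{2\alpha}.$$ In particular: - the pure-strategy equilibrium exists and is unique up to a free choice of $p^s$ (equivalently of $p^c$), with the net internaut price uniquely determined; - at every equilibrium the demand equals $\frac{D_0+\alpha p^a}{2}>0$; - there is no equilibrium with zero demand; - at equilibrium the net revenue per unit demand $p^s+p^c+p^a=\frac{D_0+\alpha p^a}{2\alpha}$ is shared in proportions $\gamma$ and $1-\gamma$ by the ISP and the CP. This sharing is effected by the regulator's choice $p^d=\gamma(p^c+p^a)-(1-\gamma)p^s$.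
   Context: Single ISP, single CP model. - $p^s$ and $p^c$ are the prices per unit demand paid by internauts to the ISP and to the CP respectively. - $p^a\ge0$ is the CP's advertising revenue per unit demand. - $p^d$ is the payment per unit demand from the CP to the ISP. - The ISP's utility is $d\,(p^s+p^d)$ and the CP's utility is $d\,(p^c+p^a-p^d)$. In the ex post regulation game, the players first set $p^s$ and $p^c$. Afterwards a regulator sets $p^d$ to maximize $U_{ISP}^\gamma U_{CP}^{1-\gamma}$, which gives $p^d=\gamma(p^c+p^a)-(1-\gamma)p^s$. Hence the ISP receives $p^s+p^d=\gamma(p^s+p^c+p^a)$ and the CP receives $p^c+p^a-p^d=(1-\gamma)(p^s+p^c+p^a)$ per unit demand. This yields the payoffs stated in the claim. *)

From HB Require Import structures.
From mathcomp Require Import all_boot all_order all_algebra.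
Set Implicit Arguments. Unset Strict Implicit. Unset Printing Implicit Defensive.
Import Order.TTheory GRing.Theory Num.Theory.
Local Open Scope ring_scope.

Definition demand (R : realFieldType) (D0 alpha ps pc : R) : R :=
  Num.max (D0 - alpha * (ps + pc)) 0.

Definition reg_pd (R : realFieldType) (gamma pa ps pc : R) : R :=
  gamma * (pc + pa) - (1 - gamma) * ps.

Definition U_ISP (R : realFieldType) (D0 alpha pa gamma ps pc : R) : R :=
  gamma * demand D0 alpha ps pc * (ps + pc + pa).

Definition U_CP (R : realFieldType) (D0 alpha pa gamma ps pc : R) : R :=
  (1 - gamma) * demand D0 alpha ps pc * (ps + pc + pa).

Definition is_NE (R : realFieldType) (D0 alpha pa gamma ps pc : R) : Prop :=
  (forall ps' : R, U_ISP D0 alpha pa gamma ps' pc <= U_ISP D0 alpha pa gamma ps pc)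
  /\ (forall pc' : R, U_CP D0 alpha pa gamma ps pc' <= U_CP D0 alpha pa gamma ps pc).

From mathcomp Require Import all_boot all_order all_algebra.
From mathcomp Require Import ring lra.
Import Order.TTheory GRing.Theory Num.Theory.
Set Implicit Arguments. Unset Strict Implicit. Unset Printing Implicit Defensive.
Local Open Scope ring_scope.

(* Both payoffs are fixed positive shares of the joint profit, which depends on
   the profile only through the total price x = ps + pc.  On the region of
   positive demand the joint profit is the concave parabola
   M - alpha (x - s)^2, and it vanishes elsewhere, while M > 0.  Hence a
   unilateral deviation of either player, which can move x anywhere, is
   unprofitable exactly when x = s, the monopoly price. *)

Definition joint_profit (R : realFieldType) (D0 alpha pa x : R) : R :=
  Num.max (D0 - alpha * x) 0 * (x + pa).

Definition monopoly_price (R : realFieldType) (D0 alpha pa : R) : R :=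
  (D0 - alpha * pa) / (2 * alpha).

Definition monopoly_profit (R : realFieldType) (D0 alpha pa : R) : R :=
  (D0 + alpha * pa) ^+ 2 / (4 * alpha).

Section JointProfit.
Variables (R : realFieldType) (D0 alpha pa : R).
Hypotheses (alpha_gt0 : 0 < alpha) (potential_gt0 : 0 < D0 + alpha * pa).

Local Notation P := (joint_profit D0 alpha pa).
Local Notation s := (monopoly_price D0 alpha pa).
Local Notation M := (monopoly_profit D0 alpha pa).

Let alpha_neq0 : alpha != 0. Proof. exact: lt0r_neq0. Qed.

Lemma joint_profit_parabola x : 0 <= D0 - alpha * x ->
  P x = M - alpha * (x - s) ^+ 2.
Proof.
move=> demand_ge0; rewrite /joint_profit /monopoly_profit /monopoly_price.
by rewrite max_l //; field; rewrite ?mulf_neq0.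
Qed.

Lemma joint_profit_no_demand x : D0 - alpha * x < 0 -> P x = 0.
Proof. by move=> /ltW demand_le0; rewrite /joint_profit max_r // mul0r. Qed.

Lemma monopoly_profit_gt0 : 0 < M.
Proof. by rewrite divr_gt0 ?exprn_gt0 ?mulr_gt0. Qed.

Lemma demand_monopoly_price : D0 - alpha * s = (D0 + alpha * pa) / 2.
Proof. by rewrite /monopoly_price; field. Qed.

Lemma joint_profit_le_max x : P x <= M.
Proof.
have [demand_ge0 | demand_lt0] := lerP 0 (D0 - alpha * x).
  by rewrite joint_profit_parabola // gerBl mulr_ge0 ?sqr_ge0 ?ltW.
by rewrite joint_profit_no_demand // ltW ?monopoly_profit_gt0.
Qed.

Lemma joint_profit_monopoly_price : P s = M.
Proof.
rewrite joint_profit_parabola ?subrr ?expr0n ?mulr0 ?subr0 //.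
by rewrite demand_monopoly_price divr_ge0 ?ltW.
Qed.

Lemma joint_profit_maxP x : M <= P x <-> x = s.
Proof.
split=> [max_x | ->]; last by rewrite joint_profit_monopoly_price.
have [demand_ge0 | demand_lt0] := lerP 0 (D0 - alpha * x); last first.
  by move: max_x; rewrite joint_profit_no_demand // leNgt monopoly_profit_gt0.
move: max_x; rewrite joint_profit_parabola // lerDl oppr_ge0 pmulr_rle0 //.
move=> sq_le0; apply/eqP.
by rewrite -subr_eq0 -sqrf_eq0 eq_le sq_le0 sqr_ge0.
Qed.

Lemma joint_profit_argmaxP x : (forall y, P y <= P x) <-> x = s.
Proof.
rewrite -joint_profit_maxP; split=> [max_x | max_x y].
  by rewrite -joint_profit_monopoly_price.
exact: le_trans (joint_profit_le_max y) max_x.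
Qed.

End JointProfit.

Lemma U_ISP_joint (R : realFieldType) (D0 alpha pa gamma ps pc : R) :
  U_ISP D0 alpha pa gamma ps pc = gamma * joint_profit D0 alpha pa (ps + pc).
Proof. by rewrite /U_ISP mulrA. Qed.

Lemma U_CP_joint (R : realFieldType) (D0 alpha pa gamma ps pc : R) :
  U_CP D0 alpha pa gamma ps pc
  = (1 - gamma) * joint_profit D0 alpha pa (ps + pc).
Proof. by rewrite /U_CP mulrA. Qed.

Lemma is_NE_joint_profit_max (R : realFieldType) (D0 alpha pa gamma ps pc : R) :
  0 < gamma -> gamma < 1 ->
  is_NE D0 alpha pa gamma ps pc <->
  (forall x, joint_profit D0 alpha pa x <= joint_profit D0 alpha pa (ps + pc)).
Proof.
move=> gamma_gt0 gamma_lt1; have cogamma_gt0 : 0 < 1 - gamma by lra.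
split=> [[isp_best _] x | max_sum].
  by have := isp_best (x - pc); rewrite !U_ISP_joint subrK ler_pM2l.
by split=> [ps' | pc']; rewrite ?U_ISP_joint ?U_CP_joint ler_pM2l.
Qed.

Lemma reg_pd_shares (R : realFieldType) (gamma pa ps pc : R) :
  ps + reg_pd gamma pa ps pc = gamma * (ps + pc + pa)
  /\ pc + pa - reg_pd gamma pa ps pc = (1 - gamma) * (ps + pc + pa).
Proof. by rewrite /reg_pd; split; ring. Qed.

Theorem theorem2 (R : realFieldType) (D0 alpha pa gamma : R)
    (hD0 : 0 < D0) (halpha : 0 < alpha) (hpa : 0 <= pa)
    (hg0 : 0 < gamma) (hg1 : gamma < 1) :
  (* characterization *)
  (forall ps pc : R,
      is_NE D0 alpha pa gamma ps pc <->
      ps + pc = (D0 - alpha * pa) / (2 * alpha))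
  (* existence, with free choice of ps (resp. pc) *)
  /\ (forall ps : R, exists pc : R, is_NE D0 alpha pa gamma ps pc)
  /\ (forall pc : R, exists ps : R, is_NE D0 alpha pa gamma ps pc)
  (* equilibrium demand, positive; hence no zero-demand equilibrium *)
  /\ (forall ps pc : R, is_NE D0 alpha pa gamma ps pc ->
        demand D0 alpha ps pc = (D0 + alpha * pa) / 2
        /\ 0 < demand D0 alpha ps pc)
  /\ (forall ps pc : R, is_NE D0 alpha pa gamma ps pc ->
        demand D0 alpha ps pc <> 0)
  (* revenue sharing at equilibrium, effected by the regulator's p^d *)
  /\ (forall ps pc : R, is_NE D0 alpha pa gamma ps pc ->
        ps + pc + pa = (D0 + alpha * pa) / (2 * alpha)
        /\ ps + reg_pd gamma pa ps pc = gamma * (ps + pc + pa)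
        /\ pc + pa - reg_pd gamma pa ps pc = (1 - gamma) * (ps + pc + pa)).
Proof.
have potential_gt0 : 0 < D0 + alpha * pa.
  by have := mulr_ge0 (ltW halpha) hpa; lra.
have NE_iff ps pc :
    is_NE D0 alpha pa gamma ps pc <-> ps + pc = monopoly_price D0 alpha pa.
  by rewrite is_NE_joint_profit_max // joint_profit_argmaxP.
have eq_demand ps pc : is_NE D0 alpha pa gamma ps pc ->
    demand D0 alpha ps pc = (D0 + alpha * pa) / 2.
  move=> /NE_iff sum_eq; rewrite /demand sum_eq demand_monopoly_price //.
  by rewrite max_l // divr_ge0 ?ltW.
have half_gt0 : 0 < (D0 + alpha * pa) / 2 by rewrite divr_gt0.
split; first exact: NE_iff.
split; first by move=> ps; exists (monopoly_price D0 alpha pa - ps); apply/NE_iff; ring.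
split; first by move=> pc; exists (monopoly_price D0 alpha pa - pc); apply/NE_iff; ring.
split; first by move=> ps pc /eq_demand ->.
split; first by move=> ps pc /eq_demand -> half_eq0; rewrite half_eq0 ltxx in half_gt0.
move=> ps pc /NE_iff sum_eq; split; last exact: reg_pd_shares.
by rewrite sum_eq /monopoly_price; field; rewrite lt0r_neq0.
Qed.
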